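(* Let $(X,T)$ be a dynamical system (a compact metrizable space $X$ with a homeomorphism $T$) which satisfies partial specification with periods $\mathcal{P}$ for some $\mathcal{P}\subseteq\mathbb{N}$ with bounded gaps. Then $(X,T)$ satisfies partial shadowing.
   Context: Fix a compatible metric $d_X$ (both properties are independent of this choice). Partial specification with periods $\mathcal{P}$: for every $\varepsilon>0$ there exist $N,M\in\mathbb{N}$ such that for every $M$-spaced specification $\{(x_i;a_i,b_i)\}_{i=1}^r$ (i.e. $x_i\in X$, integers $0\le a_1<b_1<\cdots<a_r<b_r$ with $a_{i+1}-b_i\ge M$) and every $n\in\mathcal{P}$ with $n\ge\max\{N,(1+\varepsilon)b_r\}$ there is $y\in X$ with $T^ny=y$ such that $|\{a_i\le m<b_i:d_X(T^mx_i,T^my)<\varepsilon\}|>(1-\varepsilon)(b_i-a_i)$ for every $i$. A finite sequence $(x_n)_{n=1}^N$ is $\varepsilon$-partially traced by $y$ if $|\{1\le n\le N: d_X(x_n,T^ny)<\varepsilon\}|>(1-\varepsilon)N$. It is a $\delta$-partial pseudo-orbit if $N=1$, or $N\ge2$ and $|\{1\le n\le N-1: d_X(Tx_n,x_{n+1})<\delta\}|>(1-\delta)(N-1)$. $(X,T)$ satisfies partial shadowing if for every $\varepsilon>0$ there exists $\delta>0$ such that every $\delta$-partial pseudo-orbit is $\varepsilon$-partially traced by some point of $X$. *)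

From Stdlib Require Import Reals List Arith ClassicalEpsilon.
Open Scope R_scope.

Record is_metric {X : Type} (d : X -> X -> R) : Prop := {
  metric_nonneg : forall x y, 0 <= d x y;
  metric_eq0 : forall x y, d x y = 0 <-> x = y;
  metric_sym : forall x y, d x y = d y x;
  metric_triangle : forall x y z, d x z <= d x y + d y z
}.

Definition metric_open {X : Type} (d : X -> X -> R) (U : X -> Prop) : Prop :=
  forall x, U x -> exists e, 0 < e /\ forall y, d x y < e -> U y.

Definition metric_compact {X : Type} (d : X -> X -> R) : Prop :=
  forall (I : Type) (U : I -> X -> Prop),
    (forall i, metric_open d (U i)) ->
    (forall x, exists i, U i x) ->
    exists l : list I, forall x, exists i, In i l /\ U i x.

Definition metric_continuous {X : Type} (d : X -> X -> R) (f : X -> X) : Prop :=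
  forall x e, 0 < e -> exists del, 0 < del /\
    forall y, d x y < del -> d (f x) (f y) < e.

Definition metric_homeomorphism {X : Type} (d : X -> X -> R) (T : X -> X) : Prop :=
  metric_continuous d T /\
  exists Tinv : X -> X, (forall x, Tinv (T x) = x) /\ (forall x, T (Tinv x) = x)
                        /\ metric_continuous d Tinv.

Definition dynamical_system {X : Type} (d : X -> X -> R) (T : X -> X) : Prop :=
  is_metric d /\ metric_compact d /\ metric_homeomorphism d T.

Definition iterT {X : Type} (T : X -> X) (n : nat) (x : X) : X := Nat.iter n T x.

Definition count_range (a b : nat) (P : nat -> Prop) : nat :=
  length (filter (fun m => if excluded_middle_informative (P m) then true else false)
                 (seq a (b - a))).

Definition bounded_gaps (P : nat -> Prop) : Prop :=
  exists K : nat, forall n : nat, exists p, P p /\ (n <= p < n + K)%nat.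

(** Partial specification with periods P. A specification
    {(x_i; a_i, b_i)}_{i=1}^r is encoded by r >= 1 and functions x, a, b
    indexed by i = 0, ..., r-1. *)
Definition partial_specification {X : Type} (d : X -> X -> R) (T : X -> X)
    (P : nat -> Prop) : Prop :=
  forall eps, 0 < eps -> exists N M : nat,
    forall (r : nat) (x : nat -> X) (a b : nat -> nat),
      (1 <= r)%nat ->
      (forall i, (i < r)%nat -> (a i < b i)%nat) ->
      (forall i, (i + 1 < r)%nat -> (b i + M <= a (i + 1))%nat) ->
      forall n : nat, P n -> (N <= n)%nat -> (1 + eps) * INR (b (r - 1)%nat) <= INR n ->
      exists y, iterT T n y = y /\
        forall i, (i < r)%nat ->
          INR (count_range (a i) (b i)
                 (fun m => d (iterT T m (x i)) (iterT T m y) < eps))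
          > (1 - eps) * INR (b i - a i).

Definition partial_pseudo_orbit {X : Type} (d : X -> X -> R) (T : X -> X)
    (delta : R) (N : nat) (x : nat -> X) : Prop :=
  N = 1%nat \/
  ((2 <= N)%nat /\
   INR (count_range 1 N (fun n => d (T (x n)) (x (n + 1)%nat) < delta))
   > (1 - delta) * INR (N - 1)).

Definition partially_traced {X : Type} (d : X -> X -> R) (T : X -> X)
    (eps : R) (N : nat) (x : nat -> X) (y : X) : Prop :=
  INR (count_range 1 (N + 1) (fun n => d (x n) (iterT T n y) < eps))
  > (1 - eps) * INR N.

Definition partial_shadowing {X : Type} (d : X -> X -> R) (T : X -> X) : Prop :=
  forall eps, 0 < eps -> exists delta, 0 < delta /\
    forall (N : nat) (x : nat -> X), (1 <= N)%nat ->
      partial_pseudo_orbit d T delta N x ->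
      exists y, partially_traced d T eps N x y.

From Stdlib Require Import Reals List Arith Lia Lra ClassicalEpsilon.
Open Scope R_scope.

(* Uniform continuity of T makes a pseudo-orbit without bad jumps follow the true orbit
   of its first point for any bounded time L.  Cut [1, N] into blocks of length L and use
   the specification (at precision e/4, with gap M much smaller than L) to find a single
   point y that traces, on each block except its last M times, the orbit of the block's
   first point.  On a block without bad jumps y then traces the pseudo-orbit; a block with
   a bad jump is lost, but there are fewer than delta N of them.  The losses (bad blocks,
   gap times, the incomplete last block) are each a small fraction of N.  Short
   pseudo-orbits have no bad jump at all and are traced by a preimage of x_1. *)

Lemma count_range_le (a b : nat) (P : nat -> Prop) : (count_range a b P <= b - a)%nat.
Proof.
  unfold count_range. rewrite <- (length_seq (b - a) a) at 2. apply filter_length_le.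
Qed.

Lemma count_range_split (a b c : nat) (P : nat -> Prop) : (a <= b <= c)%nat ->
  count_range a c P = (count_range a b P + count_range b c P)%nat.
Proof.
  intros Habc. unfold count_range.
  replace (c - a)%nat with (b - a + (c - b))%nat by lia.
  rewrite seq_app, filter_app, length_app.
  now replace (a + (b - a))%nat with b by lia.
Qed.

Lemma count_range_mono (a b : nat) (P Q : nat -> Prop) :
  (forall m, (a <= m < b)%nat -> P m -> Q m) ->
  (count_range a b P <= count_range a b Q)%nat.
Proof.
  intros HPQ. unfold count_range.
  assert (Hin : forall m, In m (seq a (b - a)) -> P m -> Q m)
    by (intros m Hm; apply in_seq in Hm; apply HPQ; lia).
  induction (seq a (b - a)) as [|m l IH]; simpl; [lia|].
  specialize (IH (fun k Hk => Hin k (or_intror Hk))).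
  destruct (excluded_middle_informative (P m)) as [Pm|_];
  destruct (excluded_middle_informative (Q m)) as [|nQm]; simpl; try lia.
  exfalso. exact (nQm (Hin m (or_introl eq_refl) Pm)).
Qed.

Lemma count_range_all (a b : nat) (P : nat -> Prop) :
  (forall m, (a <= m < b)%nat -> P m) -> count_range a b P = (b - a)%nat.
Proof.
  intros HP. unfold count_range. rewrite <- (length_seq (b - a) a) at 2.
  assert (Hin : forall m, In m (seq a (b - a)) -> P m)
    by (intros m Hm; apply in_seq in Hm; apply HP; lia).
  induction (seq a (b - a)) as [|m l IH]; simpl; [reflexivity|].
  specialize (IH (fun k Hk => Hin k (or_intror Hk))).
  destruct (excluded_middle_informative (P m)) as [|nPm]; simpl; [now rewrite IH|].
  exfalso. exact (nPm (Hin m (or_introl eq_refl))).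
Qed.

Lemma count_range_full (a b : nat) (P : nat -> Prop) :
  count_range a b P = (b - a)%nat -> forall m, (a <= m < b)%nat -> P m.
Proof.
  intros Hfull m Hm.
  destruct (excluded_middle_informative (P m)) as [|nPm]; [assumption|exfalso].
  assert (Hm0 : count_range m (S m) P = 0%nat).
  { unfold count_range. replace (S m - m)%nat with 1%nat by lia. simpl.
    now destruct (excluded_middle_informative (P m)). }
  rewrite (count_range_split a m b), (count_range_split m (S m) b), Hm0 in Hfull by lia.
  pose proof (count_range_le a m P). pose proof (count_range_le (S m) b P). lia.
Qed.

(* A block on which [Q] fails somewhere adds at least one to [B * L - count Q], which pays
   for the [c] it may lack. *)
Lemma count_range_blocks (P Q : nat -> Prop) (a L B : nat) (c : R) : 0 <= c ->
  (forall j, (j < B)%nat ->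
     (forall m, (a + j * L <= m < a + j * L + L)%nat -> Q m) ->
     c <= INR (count_range (a + j * L) (a + j * L + L) P)) ->
  c * (INR B - (INR (B * L) - INR (count_range a (a + B * L) Q)))
    <= INR (count_range a (a + B * L) P).
Proof.
  intros Hc Hblock. induction B as [|B IH].
  { unfold count_range. rewrite Nat.mul_0_l, Nat.add_0_r, Nat.sub_diag. simpl. lra. }
  specialize (IH (fun j Hj => Hblock j (Nat.lt_lt_succ_r j B Hj))).
  replace (a + S B * L)%nat with (a + B * L + L)%nat by lia.
  rewrite !(count_range_split a (a + B * L) (a + B * L + L)) by lia.
  rewrite !plus_INR, S_INR, mult_INR, S_INR in *.
  pose proof (count_range_le (a + B * L) (a + B * L + L) Q) as HQle.
  replace (a + B * L + L - (a + B * L))%nat with L in HQle by lia.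
  apply le_INR in HQle.
  pose proof (pos_INR (count_range (a + B * L) (a + B * L + L) P)).
  destruct (excluded_middle_informative
              (forall m, (a + B * L <= m < a + B * L + L)%nat -> Q m)) as [Hgood|Hbad].
  - pose proof (Hblock B (Nat.lt_succ_diag_r B) Hgood). nra.
  - assert (Hlt : (count_range (a + B * L) (a + B * L + L) Q + 1 <= L)%nat).
    { apply INR_le in HQle.
      enough (count_range (a + B * L) (a + B * L + L) Q <> L) by lia.
      intros Hfull. apply Hbad, count_range_full. rewrite Hfull. lia. }
    apply le_INR in Hlt. rewrite plus_INR in Hlt. simpl in Hlt. nra.
Qed.

Lemma list_pos_lower_bound {I : Type} (f : I -> R) (l : list I) :
  (forall i, 0 < f i) -> exists m, 0 < m /\ forall i, In i l -> m <= f i.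
Proof.
  intros Hf. induction l as [|i l [m [Hm Hl]]].
  - exists 1. split; [lra|]. intros i [].
  - exists (Rmin (f i) m). split; [now apply Rmin_glb_lt|].
    intros j [<-|Hj]; [apply Rmin_l|]. eapply Rle_trans; [apply Rmin_r|auto].
Qed.

Definition uniformly_continuous {X : Type} (d : X -> X -> R) (f : X -> X) : Prop :=
  forall e, 0 < e -> exists eta, 0 < eta /\
    forall y z, d y z < eta -> d (f y) (f z) < e.

Section Metric.
Context {X : Type} (d : X -> X -> R).
Hypothesis Hm : is_metric d.

Lemma metric_refl (x : X) : d x x = 0.
Proof. now apply (metric_eq0 d Hm). Qed.

Lemma metric_open_ball (c : X) (r : R) : metric_open d (fun y => d c y < r).
Proof.
  intros y Hy. exists (r - d c y). split; [lra|].
  intros z Hz. pose proof (metric_triangle d Hm c y z). lra.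
Qed.

Lemma metric_open_preimage (f : X -> X) (U : X -> Prop) :
  metric_continuous d f -> metric_open d U -> metric_open d (fun y => U (f y)).
Proof.
  intros Hf HU y Hy. destruct (HU (f y) Hy) as [e [He HUe]].
  destruct (Hf y e He) as [del [Hdel Hfdel]].
  exists del. split; [exact Hdel|]. intros z Hz. now apply HUe, Hfdel.
Qed.

Lemma lebesgue_number (I : Type) (U : I -> X -> Prop) :
  metric_compact d -> (forall i, metric_open d (U i)) -> (forall x, exists i, U i x) ->
  exists eta, 0 < eta /\ forall y, exists i, forall z, d y z < eta -> U i z.
Proof.
  intros Hc HU Hcover.
  set (J := {p : X * R | 0 < snd p /\ exists i, forall z, d (fst p) z < 2 * snd p -> U i z}).
  destruct (Hc J (fun j y => d (fst (proj1_sig j)) y < snd (proj1_sig j))) as [l Hl].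
  - intros j. apply metric_open_ball.
  - intros x. destruct (Hcover x) as [i Hi]. destruct (HU i x Hi) as [r [Hr HUr]].
    assert (Hj : 0 < snd (x, r / 2) /\
                 exists i, forall z, d (fst (x, r / 2)) z < 2 * snd (x, r / 2) -> U i z).
    { simpl. split; [lra|]. exists i. intros z Hz. apply HUr. lra. }
    exists (exist _ (x, r / 2) Hj). simpl. rewrite metric_refl. lra.
  - destruct (list_pos_lower_bound (fun j : J => snd (proj1_sig j)) l) as [eta [Heta Hle]].
    { intros j. exact (proj1 (proj2_sig j)). }
    exists eta. split; [exact Heta|]. intros y.
    destruct (Hl y) as [[[c r] [Hr [i Hi]]] [Hjl Hy]]. specialize (Hle _ Hjl). simpl in *.
    exists i. intros z Hz. apply Hi. pose proof (metric_triangle d Hm c y z). lra.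
Qed.

Lemma compact_uniformly_continuous (f : X -> X) :
  metric_compact d -> metric_continuous d f -> uniformly_continuous d f.
Proof.
  intros Hc Hf e He.
  destruct (lebesgue_number X (fun c z => d (f c) (f z) < e / 2)) as [eta [Heta Hleb]].
  - exact Hc.
  - intros c.
    exact (metric_open_preimage f (fun w => d (f c) w < e / 2) Hf (metric_open_ball (f c) _)).
  - intros c. exists c. rewrite metric_refl. lra.
  - exists eta. split; [exact Heta|]. intros y z Hyz.
    destruct (Hleb y) as [c Hc']. pose proof (Hc' y ltac:(rewrite metric_refl; lra)).
    pose proof (Hc' z Hyz). pose proof (metric_triangle d Hm (f y) (f c) (f z)).
    rewrite (metric_sym d Hm (f y) (f c)) in *. lra.
Qed.

End Metric.

Lemma iterT_add {X : Type} (T : X -> X) (m n : nat) (x : X) :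
  iterT T (m + n) x = iterT T m (iterT T n x).
Proof. apply Nat.iter_add. Qed.

Lemma iterT_cancel {X : Type} (T Tinv : X -> X) :
  (forall x, T (Tinv x) = x) -> forall n x, iterT T n (iterT Tinv n x) = x.
Proof.
  intros HT n. induction n as [|n IH]; intros x; [reflexivity|].
  unfold iterT in *. rewrite Nat.iter_succ_r. simpl. now rewrite HT.
Qed.

Section Dynamics.
Context {X : Type} (d : X -> X -> R) (T : X -> X).
Hypothesis Hm : is_metric d.

Definition finite_time_stable (delta e : R) (L : nat) : Prop :=
  forall (x : nat -> X) (s k : nat), (k <= L)%nat ->
    (forall i, (i < k)%nat -> d (T (x (s + i)%nat)) (x (s + i + 1)%nat) < delta) ->
    d (iterT T k (x s)) (x (s + k)%nat) < e.

Lemma finite_time_stable_le (delta delta' e : R) (L : nat) :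
  delta' <= delta -> finite_time_stable delta e L -> finite_time_stable delta' e L.
Proof.
  intros Hle Hst x s k Hk Hx. apply Hst; [exact Hk|].
  intros i Hi. eapply Rlt_le_trans; [apply Hx, Hi|exact Hle].
Qed.

Lemma uniformly_continuous_finite_time_stable :
  uniformly_continuous d T ->
  forall L e, 0 < e -> exists delta, 0 < delta /\ finite_time_stable delta e L.
Proof.
  intros Huc L. induction L as [|L IH]; intros e He.
  - exists 1. split; [lra|]. intros x s k Hk _.
    replace k with 0%nat by lia. rewrite Nat.add_0_r. simpl. now rewrite metric_refl.
  - destruct (Huc (e / 2)) as [eta [Heta HT]]; [lra|].
    destruct (IH (Rmin eta (e / 2))) as [delta [Hdelta Hst]]; [now apply Rmin_glb_lt; lra|].
    exists (Rmin delta (e / 2)). split; [now apply Rmin_glb_lt; lra|].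
    intros x s k Hk Hx.
    assert (Hx' : forall i, (i < k)%nat -> d (T (x (s + i)%nat)) (x (s + i + 1)%nat) < delta)
      by (intros i Hi; eapply Rlt_le_trans; [apply Hx, Hi|apply Rmin_l]).
    destruct (Nat.eq_dec k (S L)) as [->|Hne].
    + assert (Hprev : d (iterT T L (x s)) (x (s + L)%nat) < Rmin eta (e / 2))
        by (apply Hst; [lia|intros i Hi; apply Hx'; lia]).
      assert (Hstep : d (T (x (s + L)%nat)) (x (s + L + 1)%nat) < e / 2)
        by (eapply Rlt_le_trans; [apply Hx; lia|apply Rmin_r]).
      assert (Hcont : d (T (iterT T L (x s))) (T (x (s + L)%nat)) < e / 2)
        by (apply HT; eapply Rlt_le_trans; [exact Hprev|apply Rmin_l]).
      replace (s + S L)%nat with (s + L + 1)%nat by lia.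
      pose proof (metric_triangle d Hm (T (iterT T L (x s))) (T (x (s + L)%nat))
                    (x (s + L + 1)%nat)).
      change (iterT T (S L) (x s)) with (T (iterT T L (x s))). lra.
    + assert (Hprev : d (iterT T k (x s)) (x (s + k)%nat) < Rmin eta (e / 2))
        by (apply Hst; [lia|exact Hx']).
      pose proof (Rmin_r eta (e / 2)). lra.
Qed.

Lemma count_range_close_triangle (u v w : nat -> X) (a b : nat) (e1 e2 : R) :
  (forall m, (a <= m < b)%nat -> d (u m) (v m) < e1) ->
  (count_range a b (fun m => (d (v m) (w m) < e2)%R)
   <= count_range a b (fun m => (d (u m) (w m) < e1 + e2)%R))%nat.
Proof.
  intros Huv. apply count_range_mono. intros m Hm' Hvw.
  pose proof (Huv m Hm'). pose proof (metric_triangle d Hm (u m) (v m) (w m)). lra.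
Qed.

Lemma partially_traced_mono (e eps : R) (N : nat) (x : nat -> X) (y : X) :
  e <= eps -> partially_traced d T e N x y -> partially_traced d T eps N x y.
Proof.
  unfold partially_traced. intros Hle Htr.
  assert (Hcount : (count_range 1 (N + 1) (fun n => (d (x n) (iterT T n y) < e)%R)
                    <= count_range 1 (N + 1) (fun n => (d (x n) (iterT T n y) < eps)%R))%nat)
    by (apply count_range_mono; intros m _ Hm'; lra).
  apply le_INR in Hcount. pose proof (pos_INR N). nra.
Qed.

Lemma partial_pseudo_orbit_all_close (delta : R) (N : nat) (x : nat -> X) :
  delta * INR (N - 1) <= 1 -> partial_pseudo_orbit d T delta N x ->
  forall m, (1 <= m < N)%nat -> d (T (x m)) (x (m + 1)%nat) < delta.
Proof.
  intros Hsmall [->|[HN Hcount]] m Hm'; [lia|].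
  set (good := fun n => d (T (x n)) (x (n + 1)%nat) < delta) in *.
  apply (count_range_full 1 N good); [|exact Hm'].
  pose proof (count_range_le 1 N good).
  enough (Hlt : INR (N - 1) < INR (S (count_range 1 N good))) by (apply INR_lt in Hlt; lia).
  rewrite S_INR. lra.
Qed.

Lemma short_pseudo_orbit_traced (delta e : R) (L N : nat) (x : nat -> X) (w : X) :
  0 < e -> finite_time_stable delta e L -> (1 <= N <= L + 1)%nat -> T w = x 1%nat ->
  (forall m, (1 <= m < N)%nat -> d (T (x m)) (x (m + 1)%nat) < delta) ->
  partially_traced d T e N x w.
Proof.
  intros He Hst HN Hw Hclose. unfold partially_traced.
  rewrite count_range_all, Nat.add_sub; [pose proof (lt_0_INR N ltac:(lia)); nra|].
  intros m Hm'.
  replace (iterT T m w) with (iterT T (m - 1) (x 1%nat))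
    by (rewrite <- Hw; replace m with (m - 1 + 1)%nat at 2 by lia; now rewrite iterT_add).
  rewrite metric_sym by exact Hm. replace m with (1 + (m - 1))%nat at 2 by lia.
  apply Hst; [lia|]. intros i Hi. apply Hclose. lia.
Qed.

End Dynamics.

Definition specification_property {X : Type} (d : X -> X -> R) (T : X -> X)
    (eps : R) (M : nat) : Prop :=
  forall (r : nat) (x : nat -> X) (a b : nat -> nat),
    (1 <= r)%nat ->
    (forall i, (i < r)%nat -> (a i < b i)%nat) ->
    (forall i, (i + 1 < r)%nat -> (b i + M <= a (i + 1))%nat) ->
    exists y, forall i, (i < r)%nat ->
      INR (count_range (a i) (b i) (fun m => d (iterT T m (x i)) (iterT T m y) < eps))
      > (1 - eps) * INR (b i - a i).

Lemma bounded_gaps_unbounded (P : nat -> Prop) :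
  bounded_gaps P -> forall n, exists p, P p /\ (n <= p)%nat.
Proof.
  intros [K HK] n. destruct (HK n) as [p [Hp Hnp]]. exists p. split; [exact Hp|lia].
Qed.

Lemma partial_specification_property {X : Type} (d : X -> X -> R) (T : X -> X)
    (P : nat -> Prop) :
  (forall n, exists p, P p /\ (n <= p)%nat) -> partial_specification d T P ->
  forall eps, 0 < eps -> exists M, specification_property d T eps M.
Proof.
  intros Hunb Hspec eps Heps. destruct (Hspec eps Heps) as [N0 [M HNM]].
  exists M. intros r x a b Hr Hab Hgap.
  destruct (INR_archimed 1 ((1 + eps) * INR (b (r - 1)%nat))) as [n Hn]; [lra|].
  destruct (Hunb (N0 + n)%nat) as [p [Hp Hnp]].
  destruct (HNM r x a b Hr Hab Hgap p Hp) as [y [_ Hy]]; [lia| |now exists y].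
  assert (Hle : (n <= p)%nat) by lia. apply le_INR in Hle. lra.
Qed.

Lemma exists_block_length (e : R) (M : nat) :
  0 < e -> exists L, (M < L)%nat /\ INR M <= e * INR L.
Proof.
  intros He. destruct (INR_archimed e (INR M) He) as [n Hn].
  exists (n + M + 1)%nat. split; [lia|].
  rewrite !plus_INR. pose proof (pos_INR M). simpl. nra.
Qed.

Lemma exists_delta_below (delA delB e : R) (L N1 : nat) :
  0 < delA -> 0 < delB -> 0 < e <= 1 ->
  exists delta, 0 < delta /\ delta <= delA /\ delta <= delB /\
    delta * INR L <= e / 4 /\ delta * INR N1 <= 1.
Proof.
  intros HdA HdB He. pose proof (pos_INR L). pose proof (pos_INR N1).
  set (q := e / (4 * (INR L + INR N1 + 1))).
  assert (Hq : q * (4 * (INR L + INR N1 + 1)) = e) by (unfold q; field; lra).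
  assert (Hq0 : 0 < q) by (unfold q; apply Rdiv_lt_0_compat; lra).
  exists (Rmin (Rmin delA delB) q).
  pose proof (Rmin_l (Rmin delA delB) q). pose proof (Rmin_r (Rmin delA delB) q).
  pose proof (Rmin_l delA delB). pose proof (Rmin_r delA delB).
  assert (Hpos : 0 < Rmin (Rmin delA delB) q) by (repeat apply Rmin_glb_lt; lra).
  repeat split; nra.
Qed.

Lemma block_count_bound (e delta L M B N : R) :
  0 < e <= 1 -> 0 <= M -> M < L -> M <= e / 4 * L ->
  0 <= delta -> delta * L <= e / 4 ->
  0 <= B -> N - 1 < B * L + L -> 4 * (L + 1) <= e * N ->
  (1 - e) * N < (1 - e / 4) * (L - M) * (B - delta * (N - 1)).
Proof.
  intros He HM HML HMe Hd HdL HB HBL HN.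
  assert (HN1 : 1 <= N) by nra.
  assert (HcL : (1 - e / 4) * (L - M) <= L) by nra.
  assert (Hc : (1 - e / 2) * L <= (1 - e / 4) * (L - M)).
  { assert (HLM : (1 - e / 4) * L <= L - M) by lra.
    apply Rle_trans with ((1 - e / 4) * ((1 - e / 4) * L)); [nra|].
    apply Rmult_le_compat_l; lra. }
  assert (Hgood : (1 - e / 2) * (N - 1 - L) < (1 - e / 4) * (L - M) * B).
  { apply Rlt_le_trans with ((1 - e / 2) * L * B).
    - rewrite Rmult_assoc. apply Rmult_lt_compat_l; lra.
    - apply Rmult_le_compat_r; lra. }
  assert (Hbad : (1 - e / 4) * (L - M) * (delta * (N - 1)) <= e / 4 * (N - 1)).
  { apply Rle_trans with (L * (delta * (N - 1))).
    - apply Rmult_le_compat_r; [apply Rmult_le_pos|]; lra.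
    - rewrite <- Rmult_assoc, (Rmult_comm L). apply Rmult_le_compat_r; lra. }
  nra.
Qed.

Section LongPseudoOrbits.
Context {X : Type} (d : X -> X -> R) (T Tinv : X -> X).
Hypothesis Hm : is_metric d.
Hypothesis HTinv : forall x, T (Tinv x) = x.
Variables (e delta : R) (M L : nat).
Hypothesis He : 0 < e <= 1.
Hypothesis HML : (M < L)%nat.
Hypothesis HMe : INR M <= e / 4 * INR L.
Hypothesis Hdelta : 0 <= delta.
Hypothesis HdL : delta * INR L <= e / 4.
Hypothesis Hstable : finite_time_stable d T delta (e / 2) L.
Hypothesis Hspec : specification_property d T (e / 4) M.

Lemma good_block_traced (x : nat -> X) (y : X) (a : nat) :
  (forall m, (a <= m < a + L)%nat -> d (T (x m)) (x (m + 1)%nat) < delta) ->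
  (count_range a (a + (L - M))
     (fun m => (d (iterT T m (iterT Tinv a (x a))) (iterT T m y) < e / 4)%R)
   <= count_range a (a + L) (fun n => (d (x n) (iterT T n y) < e)%R))%nat.
Proof.
  intros Hclose.
  eapply Nat.le_trans; [apply (count_range_close_triangle d Hm x) with (e1 := e / 2)|].
  - intros m Hm'.
    replace (iterT T m (iterT Tinv a (x a))) with (iterT T (m - a) (x a))
      by (rewrite <- (iterT_cancel T Tinv HTinv a (x a)) at 1; rewrite <- iterT_add;
          f_equal; lia).
    rewrite metric_sym by exact Hm. replace m with (a + (m - a))%nat at 2 by lia.
    apply Hstable; [lia|]. intros i Hi. apply Hclose. lia.
  - rewrite (count_range_split a (a + (L - M)) (a + L)) by lia.
    enough (count_range a (a + (L - M)) (fun m => (d (x m) (iterT T m y) < e / 2 + e / 4)%R)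
            <= count_range a (a + (L - M)) (fun n => (d (x n) (iterT T n y) < e)%R))%nat
      by lia.
    apply count_range_mono. intros m _ Hlt. lra.
Qed.

Lemma specified_blocks_traced (x : nat -> X) (y : X) (a B : nat) :
  (forall j, (j < B)%nat ->
     INR (count_range (a + j * L) (a + j * L + (L - M))
            (fun m => d (iterT T m (iterT Tinv (a + j * L) (x (a + j * L)%nat))) (iterT T m y)
                      < e / 4))
     > (1 - e / 4) * INR (L - M)) ->
  (1 - e / 4) * (INR L - INR M) *
    (INR B - (INR (B * L)
              - INR (count_range a (a + B * L) (fun n => d (T (x n)) (x (n + 1)%nat) < delta))))
  <= INR (count_range a (a + B * L) (fun n => d (x n) (iterT T n y) < e)).
Proof.
  intros Hspecified. apply count_range_blocks.
  - apply lt_INR in HML. nra.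
  - intros j Hj Hgood. specialize (Hspecified j Hj). rewrite minus_INR in Hspecified by lia.
    pose proof (le_INR _ _ (good_block_traced x y (a + j * L) Hgood)). lra.
Qed.

Lemma long_pseudo_orbit_traced (N : nat) (x : nat -> X) :
  4 * (INR L + 1) <= e * INR N -> partial_pseudo_orbit d T delta N x ->
  exists y, partially_traced d T e N x y.
Proof.
  intros HN Hpo.
  set (good := fun n => d (T (x n)) (x (n + 1)%nat) < delta).
  set (B := ((N - 1) / L)%nat).
  assert (HLN : (L + 1 < N)%nat).
  { apply INR_lt. rewrite plus_INR. simpl. pose proof (pos_INR L). nra. }
  assert (HB : (B * L <= N - 1 < B * L + L)%nat).
  { pose proof (Nat.div_mod_eq (N - 1) L). pose proof (Nat.mod_upper_bound (N - 1) L ltac:(lia)).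
    unfold B. nia. }
  destruct Hpo as [->|[_ Hcount]]; [lia|]. fold good in Hcount.
  (* Block [j] is specified by [T^-(1 + jL) x_(1 + jL)] on its first [L - M] times;
     its last [M] times are the gap required before the next block. *)
  destruct (Hspec B (fun j => iterT Tinv (1 + j * L) (x (1 + j * L)%nat)) (fun j => 1 + j * L)%nat
              (fun j => 1 + j * L + (L - M))%nat) as [y Hy]; [nia|intros; lia|intros; nia|].
  exists y. unfold partially_traced.
  unshelve epose proof (specified_blocks_traced x y 1 B _) as Hcov.
  { intros j Hj. specialize (Hy j Hj). cbv beta in Hy.
    now replace (1 + j * L + (L - M) - (1 + j * L))%nat with (L - M)%nat in Hy by lia. }
  fold good in Hcov.
  assert (Hcover : (count_range 1 (1 + B * L) (fun n => (d (x n) (iterT T n y) < e)%R)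
                    <= count_range 1 (N + 1) (fun n => (d (x n) (iterT T n y) < e)%R))%nat)
    by (rewrite (count_range_split 1 (1 + B * L) (N + 1)) by lia; lia).
  assert (Hbad : (count_range 1 N good <= count_range 1 (1 + B * L) good + (N - 1 - B * L))%nat).
  { rewrite (count_range_split 1 (1 + B * L) N) by lia.
    pose proof (count_range_le (1 + B * L) N good). lia. }
  apply le_INR in Hcover, Hbad. rewrite plus_INR, !minus_INR in Hbad by lia.
  rewrite minus_INR in Hcount by lia.
  assert (HBN : (N - 1 < B * L + L)%nat) by lia.
  apply lt_INR in HBN. rewrite plus_INR, mult_INR, minus_INR in HBN by lia.
  rewrite !mult_INR in *. change (INR 1) with 1 in *.
  pose proof (block_count_bound e delta (INR L) (INR M) (INR B) (INR N) He (pos_INR M)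
                (lt_INR _ _ HML) HMe Hdelta HdL (pos_INR B) ltac:(lra) HN) as Hbound.
  assert (Hc : 0 <= (1 - e / 4) * (INR L - INR M)) by (apply lt_INR in HML; nra).
  assert (Hmono : (1 - e / 4) * (INR L - INR M) * (INR B - delta * (INR N - 1))
                  <= (1 - e / 4) * (INR L - INR M)
                     * (INR B - (INR B * INR L - INR (count_range 1 (1 + B * L) good))))
    by (apply Rmult_le_compat_l; lra).
  lra.
Qed.

End LongPseudoOrbits.

Theorem lemma4p7 (X : Type) (d : X -> X -> R) (T : X -> X) (P : nat -> Prop) :
  dynamical_system d T ->
  (forall n, P n -> (1 <= n)%nat) ->
  bounded_gaps P ->
  partial_specification d T P ->
  partial_shadowing d T.
Proof.
  intros [Hm [Hc [Hct [Tinv [_ [HTinv _]]]]]] _ Hgaps Hspec eps Heps.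
  set (e := Rmin eps 1).
  assert (He : 0 < e <= 1) by (split; [apply Rmin_glb_lt|apply Rmin_r]; lra).
  destruct (partial_specification_property d T P (bounded_gaps_unbounded P Hgaps) Hspec (e / 4))
    as [M HM]; [lra|].
  destruct (exists_block_length (e / 4) M) as [L [HML HMe]]; [lra|].
  destruct (INR_archimed e (4 * (INR L + 1))) as [N1 HN1]; [lra|].
  pose proof (compact_uniformly_continuous d Hm T Hc Hct) as Huc.
  destruct (uniformly_continuous_finite_time_stable d T Hm Huc L (e / 2))
    as [delA [HdA HstA]]; [lra|].
  destruct (uniformly_continuous_finite_time_stable d T Hm Huc N1 e) as [delB [HdB HstB]]; [lra|].
  destruct (exists_delta_below delA delB e L N1 HdA HdB He)
    as [delta [Hdelta [HdelA [HdelB [HdL HdN1]]]]].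
  exists delta. split; [exact Hdelta|]. intros N x HN Hpo.
  destruct (le_lt_dec N N1) as [Hshort|Hlong].
  - exists (Tinv (x 1%nat)). apply (partially_traced_mono d T e); [apply Rmin_l|].
    apply (short_pseudo_orbit_traced d T Hm delta e N1);
      [lra|exact (finite_time_stable_le d T delB delta e N1 HdelB HstB)|lia|apply HTinv|].
    apply (partial_pseudo_orbit_all_close d T); [|exact Hpo].
    assert (Hle : (N - 1 <= N1)%nat) by lia. apply le_INR in Hle. nra.
  - destruct (long_pseudo_orbit_traced d T Tinv Hm HTinv e delta M L He HML HMe
                (Rlt_le _ _ Hdelta) HdL (finite_time_stable_le d T delA delta (e / 2) L HdelA HstA)
                HM N x) as [y Hy]; [|exact Hpo|].
    + apply lt_INR in Hlong. nra.
    + exists y. apply (partially_traced_mono d T e); [apply Rmin_l|exact Hy].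
Qed.
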